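(* Let $G$ be a CGS, $s$ a state of $G$, and $\varphi$ a positive ATL/ATL$^\ast$ formula. Let $\pi_1,\pi_2:Ag\to\{\mathtt{Ir},\mathtt{IR},\mathtt{ir},\mathtt{iR}\}$ be such that $(G,\pi_1)$ and $(G,\pi_2)$ are ACGSs and $\pi_1\preceq_{Ag_\varphi}\pi_2$. If $(G,\pi_2),s\models\varphi$, then $(G,\pi_1),s\models\varphi$.
   Context: Fix a finite set $AP$ of atomic propositions. A concurrent game structure (CGS) is a tuple $G=(S,S_0,Ag,(Ac_i)_{i\in Ag},(\sim_i)_{i\in Ag},(P_i)_{i\in Ag},\Delta,\lambda)$ where $S$ is a finite set of states, $S_0\subseteq S$ initial states, $Ag=\{1,\dots,n\}$ agents, $Ac_i$ finite local actions of agent $i$, $\sim_i\subseteq S\times S$ an equivalence relation, $P_i:S\to 2^{Ac_i}$ a protocol with $P_i(s)=P_i(s')$ whenever $s\sim_i s'$, $\Delta:S\times\prod_{i\in Ag}Ac_i\to S$, and $\lambda:S\to 2^{AP}$. A path is an infinite sequence $s_0s_1\dots$ with $s_{j+1}=\Delta(s_j,\vec a_j)$ for some $\vec a_j\in\prod_iP_i(s_j)$; a history is a finite nonempty prefix of a path ($\mathrm{FPath}$ the set of histories, $\mathrm{last}(\rho)$ its last state). Histories $s_0\dots s_m$, $s'_0\dots s'_m$ are indistinguishable for $i$ if $s_j\sim_is'_j$ for all $j$. Strategy types: an $\mathtt{Ir}$-strategy of $i$ is $\theta:S\to Ac_i$ with $\theta(s)\in P_i(s)$; an $\mathtt{IR}$-strategy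 is $\theta:\mathrm{FPath}\to Ac_i$ with $\theta(\rho)\in P_i(\mathrm{last}(\rho))$; an $\mathtt{ir}$-strategy is an $\mathtt{Ir}$-strategy with $s\sim_is'\Rightarrow\theta(s)=\theta(s')$; an $\mathtt{iR}$-strategy is an $\mathtt{IR}$-strategy giving equal actions on histories indistinguishable for $i$. Memoryless strategies act on histories via the last state. Given a state $s$ and a strategy for every agent, the play from $s$ is the unique path $\rho$ with $\rho_0=s$, $\rho_{j+1}=\Delta(\rho_j,\vec a_j)$, $\vec a_j(i)$ the action of $i$'s strategy on $\rho_0\dots\rho_j$. An ACGS is a pair $M=(G,\pi)$ with $\pi:Ag\to\{\mathtt{Ir},\mathtt{IR},\mathtt{ir},\mathtt{iR}\}$ such that $\sim_i$ is the identity whenever $\pi(i)\in\{\mathtt{IR},\mathtt{Ir}\}$. ATL$^\ast$: state formulas $\varphi::=q\mid\neg\varphi\mid\varphi\wedge\varphi\mid\langle\langle A\rangle\rangle\phi$, path formulas $\phi::=\varphi\mid\neg\phi\mid\phi\wedge\phi\mid\mathbf X\phi\mid\phi\,\mathbf U\,\phi$, with derived $\vee$, $\mathbf F$, $\mathbf G$, $\mathbf R$ as usual and $[[A]]\phi=\neg\langle\langle A\rangle\rangle\neg\phi$; ATL is the fragment where each $\langle\langle A\rangle\rangle$ is immediately followed by $\mathbf X$, $\mathbf U$ or $\mathbf R$ applied to state formulas. Semantics over $M$: standard for atoms ($q\in\lambda(s)$), Booleans and temporal operators on paths; $M,s\models\langle\langle A\rangle\rangle\phi$ iff there is an assignment of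 a $\pi(i)$-strategy to each $i\in A$ such that for every assignment of a $\pi(i)$-strategy to each $i\in Ag\setminus A$, the resulting play from $s$ satisfies $\phi$. A formula $\varphi$ is positive if (1) for each occurrence of $\langle\langle A\rangle\rangle\phi$ in $\varphi$, $\phi$ is an LTL formula (a path formula whose state subformulas are atomic propositions), (2) $[[A]]\phi$ does not occur in $\varphi$, and (3) negations occur only directly in front of atomic propositions. $Ag_\varphi$ is the set of agents appearing in $\varphi$. For $A\subseteq Ag$, $\pi_1\preceq_A\pi_2$ ($\pi_1$ coarser than $\pi_2$ w.r.t. $A$) means $\pi_1(i)=\pi_2(i)$ for all $i\in A$ and for every $j\in Ag\setminus A$ one of: $\pi_1(j)=\mathtt{IR}$ and $\pi_2(j)=\mathtt{IR}$; $\pi_1(j)=\mathtt{Ir}$ and $\pi_2(j)\in\{\mathtt{IR},\mathtt{Ir}\}$; $\pi_1(j)=\mathtt{iR}$ and $\pi_2(j)\in\{\mathtt{IR},\mathtt{iR}\}$; $\pi_1(j)=\mathtt{ir}$ (and $\pi_2(j)$ arbitrary). *)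

From mathcomp Require Import all_boot.
Set Implicit Arguments. Unset Strict Implicit. Unset Printing Implicit Defensive.

Record CGS (AP : finType) := MkCGS {
  nag : nat;
  St : finType;
  init : {set St};
  Act : 'I_nag -> finType;
  indist : 'I_nag -> St -> St -> bool;
  prot : forall i : 'I_nag, St -> {set Act i};
  delta : St -> (forall i : 'I_nag, Act i) -> St;
  lab : St -> {set AP}
}.

Arguments nag {AP} _. Arguments St {AP} _. Arguments Act {AP} _ _.
Arguments indist {AP} _ _. Arguments prot {AP} _ _. Arguments delta {AP} _.
Arguments lab {AP} _.

Definition wf_cgs (AP : finType) (G : CGS AP) : Prop :=
  (forall i, forall s, indist G i s s) /\
  (forall i, forall s t, indist G i s t -> indist G i t s) /\
  (forall i, forall s t u, indist G i s t -> indist G i t u -> indist G i s u) /\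
  (forall i, forall s t, indist G i s t -> prot G i s = prot G i t).

Inductive stype := Ir | IR | ir | iR.

Section Sem.
Variable AP : finType.
Variable G : CGS AP.
Local Notation Ag := ('I_(nag G)).
Local Notation S := (St G).

Definition is_path (p : nat -> S) : Prop :=
  forall j, exists a : (forall i : Ag, Act G i),
    (forall i, a i \in prot G i (p j)) /\ p j.+1 = delta G (p j) a.

(* A finite sequence h.1 :: h.2 of states (nonempty by construction). *)
Definition hist := (S * seq S)%type.
Definition hseq (h : hist) : seq S := h.1 :: h.2.
Definition hlast (h : hist) : S := last h.1 h.2.

Definition is_history (h : hist) : Prop :=
  exists p, is_path p /\ hseq h = [seq p k | k <- iota 0 (size h.2).+1].

Definition hindist (i : Ag) (h h' : hist) : bool :=
  (size h.2 == size h'.2) && all2 (indist G i) (hseq h) (hseq h').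

(* A strategy of agent i is represented uniformly as a map on histories;
   a memoryless strategy theta : S -> Ac_i acts on histories via the last state. *)
Definition strategy (i : Ag) := hist -> Act G i.

Definition is_strat (t : stype) (i : Ag) (th : strategy i) : Prop :=
  match t with
  | Ir => exists f : S -> Act G i,
            (forall s, f s \in prot G i s) /\ (forall h, th h = f (hlast h))
  | ir => exists f : S -> Act G i,
            (forall s, f s \in prot G i s) /\
            (forall s s', indist G i s s' -> f s = f s') /\
            (forall h, th h = f (hlast h))
  | IR => forall h, is_history h -> th h \in prot G i (hlast h)
  | iR => (forall h, is_history h -> th h \in prot G i (hlast h)) /\
          (forall h h', is_history h -> is_history h' -> hindist i h h' ->
             th h = th h')
  end.

Definition is_acgs (pi : Ag -> stype) : Prop :=
  forall i, (pi i = IR \/ pi i = Ir) -> forall s s', indist G i s s' -> s = s'.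

Fixpoint play_hist (s : S) (sg : forall i : Ag, strategy i) (j : nat) : hist :=
  match j with
  | 0 => (s, [::])
  | j'.+1 => let h := play_hist s sg j' in
             (h.1, rcons h.2 (delta G (hlast h) (fun i => sg i h)))
  end.
Definition play (s : S) (sg : forall i : Ag, strategy i) (j : nat) : S :=
  hlast (play_hist s sg j).

End Sem.


(* Disjunction is included as a primitive state connective (the paper's
   derived "v"), since positive formulas are in negation normal form. *)
Inductive sform (AP : finType) (n : nat) :=
  | SAtom of AP
  | SNeg of sform AP n
  | SAnd of sform AP n & sform AP n
  | SOr of sform AP n & sform AP n
  | SCoal of {set 'I_n} & pform AP n
with pform (AP : finType) (n : nat) :=
  | PState of sform AP n
  | PNeg of pform AP n
  | PAnd of pform AP n & pform AP n
  | PX of pform AP n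
  | PU of pform AP n & pform AP n.

Arguments SAtom {AP n}. Arguments SNeg {AP n}. Arguments SAnd {AP n}.
Arguments SOr {AP n}. Arguments SCoal {AP n}.
Arguments PState {AP n}. Arguments PNeg {AP n}. Arguments PAnd {AP n}.
Arguments PX {AP n}. Arguments PU {AP n}.

Section Sat.
Variable AP : finType.
Variable G : CGS AP.
Variable pi : 'I_(nag G) -> stype.

Fixpoint sat_s (s : St G) (f : sform AP (nag G)) {struct f} : Prop :=
  match f with
  | SAtom q => q \in lab G s
  | SNeg f1 => ~ sat_s s f1
  | SAnd f1 f2 => sat_s s f1 /\ sat_s s f2
  | SOr f1 f2 => sat_s s f1 \/ sat_s s f2
  | SCoal A g =>
      exists sA : (forall i, @strategy AP G i),
        (forall i, i \in A -> is_strat (pi i) (sA i)) /\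
        forall sB : (forall i, @strategy AP G i),
          (forall i, i \notin A -> is_strat (pi i) (sB i)) ->
          sat_p (play s (fun i => if i \in A then sA i else sB i)) g
  end
with sat_p (p : nat -> St G) (g : pform AP (nag G)) {struct g} : Prop :=
  match g with
  | PState f => sat_s (p 0) f
  | PNeg g1 => ~ sat_p p g1
  | PAnd g1 g2 => sat_p p g1 /\ sat_p p g2
  | PX g1 => sat_p (fun k => p k.+1) g1
  | PU g1 g2 => exists k, sat_p (fun m => p (k + m)) g2 /\
                  forall j, j < k -> sat_p (fun m => p (j + m)) g1
  end.

End Sat.

Fixpoint is_ltl (AP : finType) (n : nat) (g : pform AP n) : bool :=
  match g with
  | PState (SAtom _) => true
  | PState _ => false
  | PNeg g1 => is_ltl g1
  | PAnd g1 g2 => is_ltl g1 && is_ltl g2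
  | PX g1 => is_ltl g1
  | PU g1 g2 => is_ltl g1 && is_ltl g2
  end.

(* (1) coalition arguments are LTL, (2)+(3) negation only in front of atoms
   (hence no [[A]] = ~<<A>>~). *)
Fixpoint positive (AP : finType) (n : nat) (f : sform AP n) : bool :=
  match f with
  | SAtom _ => true
  | SNeg (SAtom _) => true
  | SNeg _ => false
  | SAnd f1 f2 => positive f1 && positive f2
  | SOr f1 f2 => positive f1 && positive f2
  | SCoal _ g => is_ltl g
  end.

Fixpoint agents_s (AP : finType) (n : nat) (f : sform AP n) : {set 'I_n} :=
  match f with
  | SAtom _ => set0
  | SNeg f1 => agents_s f1
  | SAnd f1 f2 => agents_s f1 :|: agents_s f2
  | SOr f1 f2 => agents_s f1 :|: agents_s f2
  | SCoal A g => A :|: agents_p g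
  end
with agents_p (AP : finType) (n : nat) (g : pform AP n) : {set 'I_n} :=
  match g with
  | PState f => agents_s f
  | PNeg g1 => agents_p g1
  | PAnd g1 g2 => agents_p g1 :|: agents_p g2
  | PX g1 => agents_p g1
  | PU g1 g2 => agents_p g1 :|: agents_p g2
  end.

Definition coarser (AP : finType) (G : CGS AP) (A : {set 'I_(nag G)})
    (pi1 pi2 : 'I_(nag G) -> stype) : Prop :=
  (forall i, i \in A -> pi1 i = pi2 i) /\
  (forall j, j \notin A ->
     (pi1 j = IR /\ pi2 j = IR) \/
     (pi1 j = Ir /\ (pi2 j = IR \/ pi2 j = Ir)) \/
     (pi1 j = iR /\ (pi2 j = IR \/ pi2 j = iR)) \/
     pi1 j = ir).

From mathcomp Require Import all_boot.

Set Implicit Arguments.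
Unset Strict Implicit.
Unset Printing Implicit Defensive.

(* Positive formulas apply coalition operators only to LTL formulas, whose
   truth on a play does not depend on strategy types, and negate only atoms.
   So passing from pi2 to pi1 matters only through the strategy quantifiers of
   each <<A>>: the coalition A keeps its types, while every opponent's coarser
   type admits fewer strategies, which makes the universal quantifier over the
   opponents easier to satisfy. *)

Lemma all2_last (T : Type) (r : T -> T -> bool) (x y : T) (s t : seq T) :
  all2 r (x :: s) (y :: t) -> r (last x s) (last y t).
Proof.
elim: s t x y => [|a s IHs] [|b t] x y /=; rewrite ?andbT ?andbF //.
by case/andP=> _; apply: IHs.
Qed.

Section Strategies.
Variables (AP : finType) (G : CGS AP).

Lemma hindist_hlast (i : 'I_(nag G)) (h h' : hist G) :
  hindist i h h' -> indist G i (hlast h) (hlast h').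
Proof. by case/andP=> _; apply: all2_last. Qed.

(* [stype_le t1 t2]: every t1-strategy is a t2-strategy. *)
Definition stype_le (t1 t2 : stype) : bool :=
  match t1, t2 with
  | ir, _ | Ir, (Ir | IR) | iR, (iR | IR) | IR, IR => true
  | _, _ => false
  end.

Lemma stype_lexx (t : stype) : stype_le t t.
Proof. by case: t. Qed.

Lemma is_strat_ir (t : stype) (i : 'I_(nag G)) (th : strategy i) :
  is_strat ir th -> is_strat t th.
Proof.
case=> f [f_prot [f_uniform th_f]]; case: t => /=.
- by exists f.
- by move=> h _; rewrite th_f.
- by exists f.
- split=> [h _|h h' _ _ hh']; rewrite !th_f //.
  by apply: f_uniform; apply: hindist_hlast.
Qed.

Lemma is_strat_le (t1 t2 : stype) (i : 'I_(nag G)) (th : strategy i) :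
  stype_le t1 t2 -> is_strat t1 th -> is_strat t2 th.
Proof.
case: t1 => [| |_|].
- by case: t2 => //= _ [f [f_prot th_f]] h _; rewrite th_f.
- by case: t2.
- exact: is_strat_ir.
- by case: t2 => //= _ [].
Qed.

Lemma coarser_stype_le (A : {set 'I_(nag G)}) (pi1 pi2 : 'I_(nag G) -> stype) :
  coarser A pi1 pi2 -> forall j, stype_le (pi1 j) (pi2 j).
Proof.
case=> eq_A le_notA j; have [/eq_A ->|/le_notA] := boolP (j \in A).
  exact: stype_lexx.
by case=> [[-> ->]|[[-> [->|->]]|[[-> [->|->]]|->]]].
Qed.

End Strategies.

Section Satisfaction.
Variables (AP : finType) (G : CGS AP) (pi1 pi2 : 'I_(nag G) -> stype).

Lemma sat_p_ltl (g : pform AP (nag G)) :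
  is_ltl g -> forall p, sat_p pi1 p g <-> sat_p pi2 p g.
Proof.
elim: g => [[]|g IHg|g1 IHg1 g2 IHg2|g IHg|g1 IHg1 g2 IHg2] //=.
- by move=> ltl_g p; have := IHg ltl_g p; tauto.
- by case/andP=> ltl1 ltl2 p; have := IHg1 ltl1 p; have := IHg2 ltl2 p; tauto.
- by move=> ltl_g p; apply: IHg.
- case/andP=> /IHg1 IH1 /IHg2 IH2 p.
  split; case=> k [g2k g1j]; exists k; split=> [|j ltjk].
  + exact/IH2.
  + exact/IH1/g1j.
  + exact/IH2.
  + exact/IH1/g1j.
Qed.

Lemma sat_s_positive_le (f : sform AP (nag G)) :
  positive f -> (forall i, i \in agents_s f -> pi1 i = pi2 i) ->
  (forall j, stype_le (pi1 j) (pi2 j)) ->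
  forall s, sat_s pi2 s f -> sat_s pi1 s f.
Proof.
move=> + + le12; elim: f => [q|f _|f1 IHf1 f2 IHf2|f1 IHf1 f2 IHf2|A g] //=.
- by case: f.
- case/andP=> pos1 pos2 eq12 s [sat1 sat2].
  by split; [apply: IHf1 | apply: IHf2] => // i Hi; rewrite eq12 // inE Hi ?orbT.
- case/andP=> pos1 pos2 eq12 s [sat1|sat2]; [left; apply: IHf1 | right; apply: IHf2];
    by [|move=> i Hi; rewrite eq12 // inE Hi ?orbT].
- move=> ltl_g eq12 s [sA [sA_strat sA_wins]]; exists sA; split.
    by move=> i Hi; rewrite eq12 ?inE ?Hi //; apply: sA_strat.
  move=> sB sB_strat; apply/(sat_p_ltl ltl_g); apply: sA_wins.
  by move=> i /sB_strat; apply: is_strat_le.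
Qed.

End Satisfaction.

Theorem proposition4 (AP : finType) (G : CGS AP) (s : St G)
    (phi : sform AP (nag G)) (pi1 pi2 : 'I_(nag G) -> stype) :
  wf_cgs G -> is_acgs pi1 -> is_acgs pi2 -> positive phi ->
  coarser (agents_s phi) pi1 pi2 ->
  sat_s pi2 s phi -> sat_s pi1 s phi.
Proof.
(* Well-formedness and the ACGS conditions only make the models meaningful;
   the inclusion of strategy sets does not rely on them. *)
move=> _ _ _ pos_phi coarse12; apply: sat_s_positive_le => //.
  by case: coarse12.
exact: coarser_stype_le coarse12.
Qed.
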